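(* Consider the $16$ families of two-qubit hyperplane-states of $\mathcal{W}(3,2)$ associated with the $10$ grids $\mathcal{Q}_0,\dots,\mathcal{Q}_9$ and the $6$ ovoids $\mathcal{O}_1,\dots,\mathcal{O}_6$ of $\mathcal{W}(3,2)$, each restricted to states with maximally-mixed subsystems. Then: (i) the $\mathcal{Q}_0$-hyperplane states with maximally-mixed subsystems are exactly the general two-qubit states with maximally-mixed subsystems; (ii) the $\mathcal{Q}_i$-hyperplane states with maximally-mixed subsystems, $i=1,\dots,9$, correspond to the $X$-states of Group 2 with maximally-mixed subsystems. That is, for each $i$ there is a Group 2 point $p$ such that this family coincides with the family of type-$p$ $X$-states with maximally-mixed subsystems, and this gives a one-to-one correspondence between the $9$ grids $\mathcal{Q}_1,\dots,\mathcal{Q}_9$ and the $9$ Group 2 points; (iii) similarly, the $\mathcal{O}_i$-hyperplane states with maximally-mixed subsystems, $i=1,\dots,6$, correspond one-to-one to the $X$-states of Group 1 with maximally-mixed subsystems.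
   Context: $\mathcal{W}(3,2)$ has: - points: the $15$ nontrivial two-qubit Pauli operators $A\otimes B$ ($A,B\in\{I,X,Y,Z\}$, not both $I$), taken with phase $+1$; - lines: triples $\{P,Q,PQ\}$ (up to phase) of pairwise commuting such operators. A geometric hyperplane is a set of points meeting every line either in the whole line or in exactly one point. There are $31$ of them: - $15$ perp-sets $H_p=\{q: q\text{ commutes with }p\}$; - $10$ grids, i.e. $9$-point hyperplanes carrying $6$ lines, $3$ points per line and $2$ lines per point; - $6$ ovoids, i.e. $5$ pairwise non-commuting points. $\mathcal{Q}_0=\{A\otimes B: A,B\in\{X,Y,Z\}\}$ is one of the grids; $\mathcal{Q}_1,\dots,\mathcal{Q}_9$ denote the other nine. $\mathcal{O}_1,\dots,\mathcal{O}_6$ denote the six ovoids. For a geometric hyperplane $H$, an $H$-hyperplane state is a two-qubit density matrix $\rho=\tfrac14(I\otimes I+\sum_{q\in H}c_q q)$ with real coefficients $c_q$. For a point $p$, the type-$p$ $X$-states are the $H_p$-hyperplane states. Group 1 points are $I\otimes X, I\otimes Y, I\otimes Z, X\otimes I, Y\otimes I, Z\otimes I$; Group 2 points are the nine $A\otimes B$ with $A,B\in\{X,Y,Z\}$. A state has maximally-mixed subsystems if both one-qubit reduced states equal $\tfrac12 I$, i.e. all coefficients of operators of the form $A\otimes I$ or $I\otimes B$ vanish. *)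

From HB Require Import structures.
From mathcomp Require Import all_boot all_order all_algebra.
From mathcomp Require Import complex.
Set Implicit Arguments. Unset Strict Implicit. Unset Printing Implicit Defensive.
Import Order.TTheory GRing.Theory Num.Theory.
Local Open Scope ring_scope.
Local Open Scope complex_scope.

(* Single-qubit Pauli labels: 0 = I, 1 = X, 2 = Y, 3 = Z.
   A two-qubit Pauli label is a pair (a, b) standing for A (x) B. *)
Definition pt := ('I_4 * 'I_4)%type.

(* the 15 points of W(3,2): nontrivial two-qubit Paulis *)
Definition Pts : {set pt} := [set p : pt | p != (ord0, ord0)].

Section Ops.
Variable R : rcfType.
Local Notation C := R[i].

Definition pauliX : 'M[C]_2 := \matrix_(i < 2, j < 2) (if i != j then 1 else 0).
Definition pauliY : 'M[C]_2 :=
  \matrix_(i < 2, j < 2) (if i == j then 0 else if val i == 0%N then - 'i else 'i).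
Definition pauliZ : 'M[C]_2 :=
  \matrix_(i < 2, j < 2) (if i == j then (if val i == 0%N then 1 else -1) else 0).

Definition pauli (a : 'I_4) : 'M[C]_2 :=
  match val a with
  | 0 => 1%:M
  | 1 => pauliX
  | 2 => pauliY
  | _ => pauliZ
  end.

Definition kron (A B : 'M[C]_2) : 'M[C]_4 :=
  \matrix_(i < 4, j < 4)
    (A (inord (i %/ 2)) (inord (j %/ 2)) * B (inord (i %% 2)) (inord (j %% 2))).

Definition op (p : pt) : 'M[C]_4 := kron (pauli p.1) (pauli p.2).

Definition commute (p q : pt) : bool := op p *m op q == op q *m op p.

Definition is_line (p q r : pt) : Prop :=
  [/\ [&& p \in Pts, q \in Pts & r \in Pts],
      [&& p != q, q != r & p != r],
      [&& commute p q, commute q r & commute p r]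
    & exists lam : C, op r = lam *: (op p *m op q)].

Definition hyperplane (H : {set pt}) : Prop :=
  H \subset Pts /\
  forall p q r, is_line p q r ->
    #|H :&: [set p; q; r]| = 1%N \/ #|H :&: [set p; q; r]| = 3%N.

Definition perp (p : pt) : {set pt} := [set q in Pts | commute q p].

Definition grid (H : {set pt}) : Prop := hyperplane H /\ #|H| = 9%N.

Definition ovoid (H : {set pt}) : Prop :=
  [/\ hyperplane H, #|H| = 5%N &
      forall p q, p \in H -> q \in H -> p != q -> ~~ commute p q].

Definition psd (M : 'M[C]_4) : Prop :=
  forall v : 'cV[C]_4, 0 <= ((map_mx Num.conj v)^T *m M *m v) ord0 ord0.

Definition density (rho : 'M[C]_4) : Prop := psd rho /\ \tr rho = 1.

Definition hstate (H : {set pt}) (rho : 'M[C]_4) : Prop :=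
  density rho /\
  exists c : pt -> R,
    rho = (4%:R)^-1 *: (1%:M + \sum_(q in H) (c q)%:C *: op q).

Definition redA (rho : 'M[C]_4) : 'M[C]_2 :=
  \matrix_(i < 2, j < 2) \sum_(k < 2) rho (inord (2 * i + k)) (inord (2 * j + k)).
Definition redB (rho : 'M[C]_4) : 'M[C]_2 :=
  \matrix_(i < 2, j < 2) \sum_(k < 2) rho (inord (2 * k + i)) (inord (2 * k + j)).

Definition mms (rho : 'M[C]_4) : Prop :=
  redA rho = (2%:R)^-1%:M /\ redB rho = (2%:R)^-1%:M.

End Ops.

Definition Q0 : {set pt} := [set p : pt | (p.1 != ord0) && (p.2 != ord0)].
Definition group2 : {set pt} := Q0.
Definition group1 : {set pt} := [set p in Pts | (p.1 == ord0) || (p.2 == ord0)].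

From Pilot Require Import Defs.
From HB Require Import structures.
From mathcomp Require Import all_boot all_order all_algebra.
From mathcomp Require Import complex.
From mathcomp Require Import ring lra zify.

(* The sixteen two-qubit Pauli operators are trace-orthogonal, hence a basis
   of the 4 x 4 matrices: every state is rho = 1/4 sum_q tr(q rho) q with real
   coefficients.  Maximally-mixed subsystems kill exactly the Group 1
   coefficients (they are partial traces against traceless Paulis), so an
   H-hyperplane state with maximally-mixed subsystems is any such state whose
   Group 2 coefficients vanish outside H: the family only depends on
   H :&: group2.  For Q0 = group2 the condition is empty.  For the other grids and
   for the ovoids an exhaustive computation over all 9- and 5-point subsets of
   W(3,2) shows that H :&: group2 = perp p :&: group2 for a unique point p,
   of Group 2 for grids and of Group 1 for ovoids, and that every such point
   arises from exactly one grid, resp. ovoid. *)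

Set Implicit Arguments.
Unset Strict Implicit.
Unset Printing Implicit Defensive.

Import Order.TTheory GRing.Theory Num.Theory.
Local Open Scope ring_scope.

Lemma uniq_map_inj_in (T1 T2 : eqType) (f : T1 -> T2) (s : seq T1) :
  uniq (map f s) -> {in s &, injective f}.
Proof.
elim: s => //= x s IHs /andP[fx_s fs_uniq] y z.
rewrite !inE => /orP[/eqP-> | ys] /orP[/eqP-> | zs] // fyz.
- by rewrite fyz map_f in fx_s.
- by rewrite -fyz map_f in fx_s.
- exact: IHs.
Qed.

Lemma card_setI_seq (T : finType) (A : {set T}) (s : seq T) :
  uniq s -> #|A :&: [set x in s]| = count (mem A) s.
Proof.
move=> s_uniq; rewrite -size_filter -(card_uniqP (filter_uniq _ s_uniq)).
by apply: eq_card => x; rewrite !inE mem_filter.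
Qed.

Section TraceOrthogonalBasis.
Variables (K : fieldType) (n : nat) (I : finType) (B : I -> 'M[K]_n) (c : K).
Hypotheses (c_neq0 : c != 0) (card_basis : #|I| = (n * n)%N).
Hypothesis mxtrace_basis : forall p q, \tr (B p *m B q) = (p == q)%:R * c.

Lemma mxtrace_mul_combination (k : I -> K) p :
  \tr (B p *m \sum_q k q *: B q) = k p * c.
Proof.
rewrite mulmx_sumr raddf_sum (bigD1 p) //= big1 => [|q qp].
  by rewrite -scalemxAr mxtraceZ mxtrace_basis eqxx mul1r addr0.
by rewrite -scalemxAr mxtraceZ mxtrace_basis eq_sym (negbTE qp) mul0r mulr0.
Qed.

Lemma trace_orthogonal_expansion (M : 'M[K]_n) :
  M = \sum_q (c^-1 * \tr (B q *m M)) *: B q.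
Proof.
pose X := [tuple B (enum_val i) | i < #|I|].
have sumX (k : 'I_#|I| -> K) : \sum_i k i *: X`_i = \sum_q k (enum_rank q) *: B q.
  rewrite (reindex enum_rank) /=; last exact/onW_bij/(Bijective enum_rankK enum_valK).
  by apply: eq_bigr => q _; rewrite nth_mktuple enum_rankK.
have freeX : free X.
  apply/freeP => k kX0 i.
  have := congr1 (fun N => \tr (B (enum_val i) *m N)) kX0.
  rewrite /= sumX mxtrace_mul_combination enum_valK mulmx0 mxtrace0.
  by move/eqP; rewrite mulf_eq0 (negbTE c_neq0) orbF => /eqP.
have spanX : (<<X>> = fullv)%VS.
  apply/eqP; rewrite eqEdim subvf dimvf dim_matrix (eqnP freeX) size_tuple.
  by rewrite card_basis; apply: leqnn.
have M_span : M \in <<X>>%VS by rewrite spanX memvf.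
have := coord_span M_span; rewrite sumX => M_def; rewrite {1}M_def.
apply: eq_bigr => q _; congr (_ *: _).
by rewrite {2}M_def mxtrace_mul_combination mulrC mulfK.
Qed.

End TraceOrthogonalBasis.

Definition pair4 (x y : 'I_2) : 'I_4 := inord (2 * x + y).

Lemma pair4_fst (x y : 'I_2) : inord (pair4 x y %/ 2) = x.
Proof. by apply: val_inj; have hx := ltn_ord x; have hy := ltn_ord y; rewrite /= !inordK; lia. Qed.

Lemma pair4_snd (x y : 'I_2) : inord (pair4 x y %% 2) = y.
Proof. by apply: val_inj; have hx := ltn_ord x; have hy := ltn_ord y; rewrite /= !inordK; lia. Qed.

Lemma pair4_split (i : 'I_4) : pair4 (inord (i %/ 2)) (inord (i %% 2)) = i.
Proof. by apply: val_inj; have hi := ltn_ord i; rewrite /= !inordK; lia. Qed.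

Lemma pair4_eq (x y x' y' : 'I_2) :
  (pair4 x y == pair4 x' y') = (x == x') && (y == y').
Proof.
apply/eqP/andP => [| [/eqP-> /eqP->] //].
move/(congr1 (fun i : 'I_4 => (inord (i %/ 2) : 'I_2, inord (i %% 2) : 'I_2))).
by rewrite /= !pair4_fst !pair4_snd => -[-> ->].
Qed.

Lemma big_ord4_pair (V : nmodType) (F : 'I_4 -> V) :
  \sum_(i < 4) F i = \sum_(x < 2) \sum_(y < 2) F (pair4 x y).
Proof.
rewrite !big_ord_recr !big_ord0 /= !add0r -!addrA; congr (F _ + (F _ + (F _ + F _)));
  by apply: val_inj; rewrite /= inordK.
Qed.

Lemma matrix4_pairP (V : Type) (M N : 'M[V]_4) :
  (forall x y x' y', M (pair4 x y) (pair4 x' y') = N (pair4 x y) (pair4 x' y')) -> M = N.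
Proof. by move=> MN; apply/matrixP => i j; rewrite -(pair4_split i) -(pair4_split j). Qed.

(* Reading the labels 0, 1, 2, 3 of I, X, Y, Z as 2-bit vectors, the product
   of two Paulis is, up to the phase i ^+ pauli_phase a b, the Pauli labelled
   by the bitwise xor; the exponent 1 or 3 is the sign of the Levi-Civita
   symbol. *)
Lemma lxor4_lt (a b : 'I_4) : (Nat.lxor a b < 4)%N.
Proof. by case: a => [[|[|[|[|a]]]] //= Ha]; case: b => [[|[|[|[|b]]]] //= Hb]. Qed.

Definition xor4 (a b : 'I_4) : 'I_4 := Ordinal (lxor4_lt a b).

Definition pauli_phase (a b : 'I_4) : nat :=
  match val a, val b with
  | 1, 2 | 2, 3 | 3, 1 => 1
  | 2, 1 | 3, 2 | 1, 3 => 3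
  | _, _ => 0
  end%N.

Definition pauli_anticomm (a b : nat) : bool := [&& a != 0, b != 0 & a != b]%N.

Lemma xor4_eq0 a b : (xor4 a b == ord0) = (a == b).
Proof. by case: a => [[|[|[|[|a]]]] //= Ha]; case: b => [[|[|[|[|b]]]] //= Hb]. Qed.

Lemma pauli_phase_diag a : pauli_phase a a = 0%N.
Proof. by case: a => [[|[|[|[|a]]]] //= Ha]. Qed.

Definition pt_mul (p q : pt) : pt := (xor4 p.1 q.1, xor4 p.2 q.2).

Definition pt_phase (p q : pt) : nat := pauli_phase p.1 q.1 + pauli_phase p.2 q.2.

Definition pt_anticomm (p q : pt) : bool :=
  pauli_anticomm p.1 q.1 (+) pauli_anticomm p.2 q.2.

Local Ltac by_components := apply/eqP; rewrite eq_complex /=; apply/andP; split; apply/eqP.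

Section Pauli.
Variable R : rcfType.
Local Notation C := R[i].
Implicit Types A B D E : 'M[C]_2.

Lemma kron_pair A B x y x' y' :
  kron A B (pair4 x y) (pair4 x' y') = A x x' * B y y'.
Proof. by rewrite mxE !pair4_fst !pair4_snd. Qed.

Lemma mulmx_kron A B D E : kron A B *m kron D E = kron (A *m D) (B *m E).
Proof.
apply: matrix4_pairP => x y x' y'; rewrite kron_pair !mxE big_ord4_pair.
rewrite big_distrlr /=; apply: eq_bigr => u _; apply: eq_bigr => v _.
by rewrite !kron_pair mulrACA.
Qed.

Lemma mxtrace_kron A B : \tr (kron A B) = \tr A * \tr B.
Proof.
rewrite /mxtrace big_ord4_pair big_distrlr /=.
by apply: eq_bigr => x _; apply: eq_bigr => y _; rewrite kron_pair.
Qed.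

Lemma kronZ a b A B : kron (a *: A) (b *: B) = (a * b) *: kron A B.
Proof. by apply/matrixP => i j; rewrite !mxE mulrACA. Qed.

Lemma kron1 : kron 1%:M 1%:M = 1%:M :> 'M[C]_4.
Proof.
by apply: matrix4_pairP => x y x' y'; rewrite kron_pair !mxE -natrM mulnb pair4_eq.
Qed.

Lemma hermitianP n (M : 'M[C]_n) :
  reflect (forall i j, Num.conj (M j i) = M i j) (M \is hermsymmx).
Proof.
apply: (iffP (is_hermitianmxP _ _ _)); rewrite expr0 scale1r; [move=> hM i j | move=> hM].
  by rewrite [in RHS]hM !mxE.
by apply/matrixP => i j; rewrite !mxE hM.
Qed.

Lemma hermitian_kron A B :
  A \is hermsymmx -> B \is hermsymmx -> kron A B \is hermsymmx.
Proof.
move=> /hermitianP hA /hermitianP hB; apply/hermitianP => i j.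
by rewrite !mxE rmorphM /= hA hB.
Qed.

Lemma mxtrace_kron1l A (M : 'M[C]_4) : \tr (kron A 1%:M *m M) = \tr (A *m redA M).
Proof.
rewrite /mxtrace big_ord4_pair; apply: eq_bigr => x _; rewrite mxE.
under eq_bigr do rewrite mxE big_ord4_pair.
rewrite exchange_big /=; apply: eq_bigr => x' _; rewrite mxE mulr_sumr.
apply: eq_bigr => y _; rewrite (bigD1 y) //= big1 => [|y' /negbTE y'y].
  by rewrite kron_pair mxE eqxx mulr1 addr0.
by rewrite kron_pair mxE eq_sym y'y mulr0 mul0r.
Qed.

Lemma mxtrace_kron1r B (M : 'M[C]_4) : \tr (kron 1%:M B *m M) = \tr (B *m redB M).
Proof.
rewrite /mxtrace big_ord4_pair exchange_big /=; apply: eq_bigr => y _.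
rewrite mxE; under [RHS]eq_bigr do rewrite mxE mulr_sumr.
rewrite exchange_big /=; apply: eq_bigr => x _.
rewrite mxE big_ord4_pair (bigD1 x) //= [X in _ + X]big1 ?addr0 => [|x' x'x].
  by apply: eq_bigr => y' _; rewrite kron_pair mxE eqxx mul1r.
by apply: big1 => y' _; rewrite kron_pair mxE eq_sym (negbTE x'x) !mul0r.
Qed.

Lemma pauli_mul a b :
  pauli R a *m pauli R b = 'i%C ^+ pauli_phase a b *: pauli R (xor4 a b).
Proof.
case: a => [[|[|[|[|a]]]] //= Ha]; case: b => [[|[|[|[|b]]]] //= Hb];
apply/matrixP => -[[|[|x]] //= Hx] [[|[|y]] //= Hy];
rewrite !mxE !big_ord_recr !big_ord0 /= !mxE /=; by_components; ring.
Qed.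

Lemma pauli_mulC a b :
  pauli R b *m pauli R a = (-1) ^+ pauli_anticomm a b *: (pauli R a *m pauli R b).
Proof.
case: a => [[|[|[|[|a]]]] //= Ha]; case: b => [[|[|[|[|b]]]] //= Hb];
apply/matrixP => -[[|[|x]] //= Hx] [[|[|y]] //= Hy];
rewrite !mxE !big_ord_recr !big_ord0 /= !mxE /=; by_components; ring.
Qed.

Lemma mxtrace_pauli a : \tr (pauli R a) = (a == ord0)%:R *+ 2.
Proof.
case: a => [[|[|[|[|a]]]] //= Ha]; rewrite /mxtrace !big_ord_recr !big_ord0 /= !mxE /=;
  by_components; ring.
Qed.

Lemma hermitian_pauli a : pauli R a \is hermsymmx.
Proof.
apply/hermitianP; case: a => [[|[|[|[|a]]]] //= Ha] => -[[|[|x]] //= Hx] [[|[|y]] //= Hy];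
  rewrite !mxE /=; by_components; ring.
Qed.

Lemma op_mul p q : op R p *m op R q = 'i%C ^+ pt_phase p q *: op R (pt_mul p q).
Proof. by rewrite /op mulmx_kron !pauli_mul kronZ -exprD. Qed.

Lemma op_mulC p q : op R q *m op R p = (-1) ^+ pt_anticomm p q *: (op R p *m op R q).
Proof. by rewrite /op !mulmx_kron pauli_mulC (pauli_mulC p.2) kronZ -signr_addb. Qed.

Lemma op0 : op R (ord0, ord0) = 1%:M.
Proof. exact: kron1. Qed.

Lemma mxtrace_op p : \tr (op R p) = (p == (ord0, ord0))%:R * 4.
Proof.
rewrite /op mxtrace_kron !mxtrace_pauli mulrnAl mulrnAr -mulrnA -natrM mulnb mulr_natr.
by case: p.
Qed.

Lemma hermitian_op p : op R p \is hermsymmx.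
Proof. exact/hermitian_kron/hermitian_pauli/hermitian_pauli. Qed.

Lemma expr_i_neq0 k : 'i%C ^+ k != 0 :> C.
Proof.
apply: expf_neq0; apply: contra_neq (@oner_neq0 C) => i0.
by rewrite -[1]opprK -sqr_i i0 expr0n oppr0.
Qed.

Lemma mxtrace_op_mul p q : \tr (op R p *m op R q) = (p == q)%:R * 4.
Proof.
have pq0 : (pt_mul p q == (ord0, ord0)) = (p == q) by rewrite xpair_eqE !xor4_eq0.
rewrite op_mul mxtraceZ mxtrace_op pq0; case: eqP => [->|_]; last by rewrite !mul0r mulr0.
by rewrite /pt_phase !pauli_phase_diag mul1r.
Qed.

Lemma op_neq0 p : op R p != 0.
Proof.
apply/eqP => p0; have := mxtrace_op_mul p p.
by rewrite p0 mul0mx mxtrace0 eqxx mul1r => /eqP; rewrite eq_sym pnatr_eq0.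
Qed.

Lemma commuteE p q : Defs.commute R p q = ~~ pt_anticomm p q.
Proof.
rewrite /Defs.commute (op_mulC p q); case: (pt_anticomm p q); last by rewrite scale1r eqxx.
apply/negbTE; rewrite scaleN1r -subr_eq0 opprK -mulr2n -scaler_nat scalemx_eq0 pnatr_eq0.
by rewrite op_mul scalemx_eq0 !negb_or expr_i_neq0 op_neq0.
Qed.

Lemma op_mul_scaledP p q r :
  (exists lam : C, op R r = lam *: (op R p *m op R q)) <-> r = pt_mul p q.
Proof.
rewrite op_mul; split => [[lam] | ->]; last first.
  by exists ('i%C ^+ pt_phase p q)^-1; rewrite scalerA mulVf ?scale1r ?expr_i_neq0.
rewrite scalerA => op_r; apply/eqP/negPn/negP => /negbTE r'pq.
have := mxtrace_op_mul r r; rewrite {2}op_r -scalemxAr mxtraceZ mxtrace_op_mul r'pq.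
by rewrite mul0r mulr0 eqxx mul1r => /eqP; rewrite eq_sym pnatr_eq0.
Qed.

End Pauli.

Section Density.
Variable R : rcfType.
Local Notation C := R[i].
Implicit Types (M rho : 'M[C]_4) (H : {set pt}).

Lemma real_complexE (z : C) : Num.conj z = z -> (complex.Re z)%:C%C = z.
Proof.
case: z => a b zE; have : conjc (a +i* b)%C = (a +i* b)%C by [].
by case=> nb; by_components; lra.
Qed.

Lemma mxtrace_mul_hermitian_real n (A B : 'M[C]_n) :
  A \is hermsymmx -> B \is hermsymmx -> Num.conj (\tr (A *m B)) = \tr (A *m B).
Proof.
move=> /hermitianP hA /hermitianP hB.
have -> : \tr (A *m B) = \sum_i \sum_k A i k * B k i by apply: eq_bigr => i _; rewrite mxE.
rewrite rmorph_sum; under eq_bigr do rewrite rmorph_sum.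
rewrite [LHS]exchange_big; apply: eq_bigr => k _; apply: eq_bigr => i _.
by rewrite rmorphM /= hA hB.
Qed.

Lemma sum_delta_pair n (i j : 'I_n) (y : C) (F : 'I_n -> C) :
  \sum_k ((i == k)%:R + y * (j == k)%:R) * F k = F i + y * F j.
Proof.
have delta (l : 'I_n) : \sum_k (l == k)%:R * F k = F l.
  rewrite (bigD1 l) //= eqxx mul1r big1 ?addr0 // => k kl.
  by rewrite eq_sym (negbTE kl) mul0r.
under eq_bigr do rewrite mulrDl -mulrA.
by rewrite big_split /= -mulr_sumr !delta.
Qed.

Lemma quad_form_pair M i j (x : C) :
  let v : 'cV[C]_4 := \col_k ((i == k)%:R + x * (j == k)%:R) in
  ((map_mx Num.conj v)^T *m M *m v) ord0 ord0 =
  M i i + x * M i j + Num.conj x * (M j i + x * M j j).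
Proof.
move=> v; rewrite mxE; under eq_bigr do rewrite [v _ _]mxE mulrC.
rewrite sum_delta_pair.
have row_vM k : ((map_mx Num.conj v)^T *m M) ord0 k = M i k + Num.conj x * M j k.
  rewrite mxE -(sum_delta_pair i j _ (M^~ k)); apply: eq_bigr => l _.
  by rewrite !mxE rmorphD rmorphM /= !rmorph_nat.
by rewrite !row_vM; ring.
Qed.

(* 0 <= z forces z to be real; apply this to the form at e_i + x e_j for x = 0, 1, i. *)
Lemma psd_hermitian M : psd M -> M \is hermsymmx.
Proof.
move=> psdM; apply/hermitianP => i j.
have form_ge0 k l (x : C) : 0 <= M k k + x * M k l + Num.conj x * (M l k + x * M l l).
  by rewrite -quad_form_pair; apply: psdM.
have := form_ge0 i i 0; have := form_ge0 j j 0.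
have := form_ge0 i j 1; have := form_ge0 i j 'i%C.
rewrite !rmorph0 !rmorph1 !mul0r !mul1r !addr0.
case: (M i i) (M i j) (M j i) (M j j) => [a b] [c d] [e f] [g h].
rewrite !lecE /= => /andP[/eqP h1 _] /andP[/eqP h2 _] /andP[/eqP h3 _] /andP[/eqP h4 _].
by by_components; lra.
Qed.

Lemma Pts_group12 : Pts = group1 :|: group2.
Proof.
apply/setP => -[a b]; rewrite /group2 /Q0 !inE xpair_eqE /=.
by case: (a == ord0); case: (b == ord0).
Qed.

Lemma mxtrace_op_group1 rho q :
  mms rho -> q \in group1 -> \tr (op R q *m rho) = 0.
Proof.
case=> redA_rho redB_rho; rewrite !inE; case: q => a b /=.
rewrite xpair_eqE => /andP[ab0 /orP[] /eqP ab_0]; rewrite ab_0 eqxx ?andbT ?andTb in ab0.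
- rewrite /op /= ab_0 mxtrace_kron1r redB_rho mul_mx_scalar mxtraceZ mxtrace_pauli.
  by rewrite (negbTE ab0) mulr0n mul0rn mulr0.
- rewrite /op /= ab_0 mxtrace_kron1l redA_rho mul_mx_scalar mxtraceZ mxtrace_pauli.
  by rewrite (negbTE ab0) mulr0n mul0rn mulr0.
Qed.

Lemma pauli_expansion M : M = \sum_q (4^-1 * \tr (op R q *m M)) *: op R q.
Proof.
apply: (@trace_orthogonal_expansion _ _ _ (op R) 4); last exact: mxtrace_op_mul.
  by rewrite pnatr_eq0.
by rewrite card_prod card_ord.
Qed.

Lemma hstateE H rho : H \subset Pts ->
  hstate H rho <-> density rho /\ {in Pts :\: H, forall q, \tr (op R q *m rho) = 0}.
Proof.
move=> HPts; split => [[dens [c rhoE]] | [dens tr0]].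
  split => // q; rewrite inE => /andP[qH qPts].
  rewrite rhoE -scalemxAr mxtraceZ mulmxDr mulmx1 mxtraceD mxtrace_op.
  move: qPts; rewrite inE => /negbTE ->; rewrite mul0r add0r.
  rewrite mulmx_sumr raddf_sum /= big1 ?mulr0 // => r rH.
  rewrite -scalemxAr mxtraceZ mxtrace_op_mul.
  by case: eqP qH => [->|_]; rewrite ?rH // mul0r mulr0.
split => //; exists (fun q => complex.Re (\tr (op R q *m rho))).
rewrite scalerDr scaler_sumr {1}[rho]pauli_expansion (bigD1 (ord0, ord0)) //=.
rewrite op0 mul1mx dens.2 mulr1 scalemx1; congr (_ + _).
rewrite big_mkcond [RHS]big_mkcond; apply: eq_bigr => q _.
rewrite real_complexE ?scalerA; last first.
  exact/mxtrace_mul_hermitian_real/psd_hermitian/dens.1/hermitian_op.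
case: (boolP (q \in H)) => qH.
  by move: (subsetP HPts q qH); rewrite inE => ->.
case: eqP => // /eqP q0.
by rewrite tr0 ?mulr0 ?scale0r // !inE qH q0.
Qed.

Lemma hstate_mmsE H rho : H \subset Pts ->
  hstate H rho /\ mms rho <->
  [/\ density rho, mms rho & {in group2 :\: H, forall q, \tr (op R q *m rho) = 0}].
Proof.
move=> HPts; split => [[/(hstateE _ HPts) [dens tr0] mmsr] | [dens mmsr tr0]].
  split => // q; rewrite inE => /andP[qH q2]; apply: tr0.
  by rewrite inE qH Pts_group12 in_setU q2 orbT.
split => //; apply/(hstateE _ HPts); split => // q.
rewrite inE Pts_group12 in_setU => /andP[qH /orP[q1 | q2]].
  exact: mxtrace_op_group1.
by apply: tr0; rewrite inE qH q2.
Qed.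

Lemma hstate_mms_trace2 H H' rho : H \subset Pts -> H' \subset Pts ->
  H :&: group2 = H' :&: group2 ->
  hstate H rho /\ mms rho <-> hstate H' rho /\ mms rho.
Proof.
move=> HPts H'Pts HH'; have g2E : group2 :\: H = group2 :\: H'.
  apply/setP => q; move/setP/(_ q): HH'; rewrite !in_setI !in_setD.
  by case: (q \in group2); rewrite ?andbT ?andbF // => ->.
split => [/(hstate_mmsE _ HPts) | /(hstate_mmsE _ H'Pts)] [d m t].
  by apply/(hstate_mmsE _ H'Pts); rewrite -g2E.
by apply/(hstate_mmsE _ HPts); rewrite g2E.
Qed.

End Density.

Local Close Scope ring_scope.

(* The point (a, b) is coded by the 4-bit number 4 a + b, so that Pauli
   multiplication becomes bitwise xor (code_mul) and subsets of points become
   bit vectors on which the geometry of W(3,2) can be evaluated. *)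
Definition code (p : pt) : nat := 4 * p.1 + p.2.
Definition decode (k : nat) : pt := (inord (k %/ 4), inord (k %% 4)).

Lemma code_lt p : code p < 16.
Proof. by case: p => -[a ha] [b hb]; rewrite /code /=; lia. Qed.

Lemma code_div p : code p %/ 4 = p.1.
Proof. by case: p => -[a ha] [b hb]; rewrite /code /=; lia. Qed.

Lemma code_mod p : code p %% 4 = p.2.
Proof. by case: p => -[a ha] [b hb]; rewrite /code /=; lia. Qed.

Lemma codeK : cancel code decode.
Proof. by case=> a b; rewrite /decode code_div code_mod !inord_val. Qed.

Lemma decodeK k : k < 16 -> code (decode k) = k.
Proof. by move=> k16; rewrite /code /= !inordK; lia. Qed.

Lemma code_in_iota p : code p \in iota 0 16.
Proof. by rewrite mem_iota leq0n code_lt. Qed.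

Lemma code_mul p q : code (pt_mul p q) = Nat.lxor (code p) (code q).
Proof.
by move: p q => [[[|[|[|[|a]]]] ha] [[|[|[|[|b]]]] hb]] [[[|[|[|[|c]]]] hc] [[|[|[|[|d]]]] hd]].
Qed.

Definition code_anticomm (i j : nat) : bool :=
  pauli_anticomm (i %/ 4) (j %/ 4) (+) pauli_anticomm (i %% 4) (j %% 4).

Lemma pt_anticommE p q : pt_anticomm p q = code_anticomm (code p) (code q).
Proof. by rewrite /code_anticomm !code_div !code_mod. Qed.

Definition group1_code (k : nat) : bool := (k != 0) && ((k %/ 4 == 0) || (k %% 4 == 0)).
Definition group2_code (k : nat) : bool := (k %/ 4 != 0) && (k %% 4 != 0).

Lemma in_Pts p : (p \in Pts) = (code p != 0).
Proof. by rewrite inE -(inj_eq (can_inj codeK)). Qed.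

Lemma in_group1 p : (p \in group1) = group1_code (code p).
Proof. by rewrite in_set in_Pts /group1_code code_div code_mod. Qed.

Lemma in_group2 p : (p \in group2) = group2_code (code p).
Proof. by rewrite inE /group2_code code_div code_mod. Qed.

Implicit Types H : {set pt}.

Definition bits H : seq bool := [seq decode k \in H | k <- iota 0 16].
Definition set_of_bits (s : seq bool) : {set pt} := [set p | nth false s (code p)].

Lemma size_bits H : size (bits H) = 16.
Proof. by rewrite size_map size_iota. Qed.

Lemma nth_bits H k : k < 16 -> nth false (bits H) k = (decode k \in H).
Proof. by move=> k16; rewrite (nth_map 0) ?size_iota // nth_iota. Qed.

Lemma mem_bits H p : (p \in H) = nth false (bits H) (code p).
Proof. by rewrite nth_bits ?code_lt // codeK. Qed.

Lemma bits_inj : injective bits.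
Proof. by move=> H H' HH'; apply/setP => p; rewrite !mem_bits HH'. Qed.

Lemma set_of_bitsK s : size s = 16 -> bits (set_of_bits s) = s.
Proof.
move=> s16; apply: (@eq_from_nth _ false); rewrite size_bits ?s16 // => k k16.
by rewrite nth_bits // inE decodeK.
Qed.

Lemma card_bits H : #|H| = count id (bits H).
Proof.
pose pts := [seq decode k | k <- iota 0 16].
have pts_uniq : uniq pts.
  rewrite map_inj_in_uniq ?iota_uniq // => i j; rewrite !mem_iota /= => i16 j16 ij.
  by rewrite -(decodeK i16) -(decodeK j16) ij.
have ptsT : [set x in pts] = setT.
  by apply/setP => p; rewrite in_set in_setT -(codeK p); apply/map_f/code_in_iota.
by rewrite -{1}[H]setIT -ptsT card_setI_seq // /bits !count_map.
Qed.

Lemma card_set3 H p q r : p != q -> q != r -> p != r ->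
  #|H :&: [set p; q; r]| = (p \in H) + (q \in H) + (r \in H).
Proof.
move=> pq qr pr; rewrite (_ : [set p; q; r] = [set x in [:: p; q; r]]).
  by rewrite card_setI_seq /= ?addn0 ?addnA // !inE negb_or pq pr qr.
by apply/setP => x; rewrite !inE orbA.
Qed.

Definition code_line (i j k : nat) : bool :=
  [&& [&& i != 0, j != 0 & k != 0], [&& i != j, j != k & i != k],
      [&& ~~ code_anticomm i j, ~~ code_anticomm j k & ~~ code_anticomm i k]
    & k == Nat.lxor i j].

Definition hyperplane_bits (s : seq bool) : bool :=
  all (fun i => all (fun j => let k := Nat.lxor i j in
    code_line i j k ==> (nth false s i + nth false s j + nth false s k \in [:: 1; 3]))
  (iota 0 16)) (iota 0 16).

Definition anticomm_bits (s : seq bool) : bool :=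
  all (fun i => all (fun j =>
    [&& nth false s i, nth false s j & i != j] ==> code_anticomm i j)
  (iota 0 16)) (iota 0 16).

Fixpoint bitseqs (n k : nat) : seq (seq bool) :=
  if n is n'.+1 then
    [seq false :: s | s <- bitseqs n' k] ++
    (if k is k'.+1 then [seq true :: s | s <- bitseqs n' k'] else [::])
  else if k is 0 then [:: [::]] else [::].

Lemma mem_bitseqs s : s \in bitseqs (size s) (count id s).
Proof.
elim: s => [|[] s IHs] //=; rewrite mem_cat; last by rewrite map_f.
by rewrite add1n map_f ?orbT.
Qed.

Lemma bitseqsP n k s : s \in bitseqs n k -> size s = n /\ count id s = k.
Proof.
elim: n k s => [|n IHn] k s /=; first by case: k => //; rewrite inE => /eqP->.
rewrite mem_cat => /orP[/mapP[t /IHn[<- <-] ->] // | ].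
by case: k => // k /mapP[t /IHn[<- <-] ->].
Qed.

(* Bit 0 codes the identity, which lies in no hyperplane. *)
Definition pointsets (k : nat) : seq (seq bool) := [seq false :: s | s <- bitseqs 15 k].

Lemma pointsetsP s k : s \in pointsets k ->
  [/\ size s = 16, count id s = k & set_of_bits s \subset Pts].
Proof.
case/mapP => t /bitseqsP[t15 tk] ->; split; rewrite /= ?t15 ?tk //.
by apply/subsetP => p; rewrite inE in_Pts; apply: contraTneq => ->.
Qed.

Lemma bits_in_pointsets H : H \subset Pts -> bits H \in pointsets #|H|.
Proof.
move=> HPts; have : nth false (bits H) 0 = false.
  by rewrite nth_bits //; apply/negP => /(subsetP HPts); rewrite in_Pts decodeK.
rewrite card_bits; case: (bits H) (size_bits H) => [|b t] //= [t15] ->.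
by rewrite add0n map_f // -t15 mem_bitseqs.
Qed.

Definition grid_bits : seq (seq bool) := [seq s <- pointsets 9 | hyperplane_bits s].
Definition ovoid_bits : seq (seq bool) :=
  [seq s <- pointsets 5 | hyperplane_bits s && anticomm_bits s].

Definition trace2_bits (s : seq bool) : seq bool :=
  [seq nth false s k && group2_code k | k <- iota 0 16].
Definition perp_bits (k : nat) : seq bool :=
  [seq (i != 0) && ~~ code_anticomm i k | i <- iota 0 16].
Definition group2_bits : seq bool := [seq group2_code k | k <- iota 0 16].

Lemma bits_setI_group2 H : bits (H :&: group2) = trace2_bits (bits H).
Proof.
apply/eq_in_map => k; rewrite mem_iota => /andP[_ k16].
by rewrite in_setI nth_bits // in_group2 decodeK.
Qed.

Lemma bits_group2 : bits group2 = group2_bits.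
Proof.
by apply/eq_in_map => k; rewrite mem_iota => /andP[_ k16]; rewrite in_group2 decodeK.
Qed.

Lemma grid_bits_traces :
  all (fun s => (s == group2_bits) || has (fun k =>
    group2_code k && (trace2_bits s == trace2_bits (perp_bits k))) (iota 0 16)) grid_bits.
Proof. by vm_compute. Qed.

Lemma grid_bits_traces_uniq : uniq (map trace2_bits grid_bits).
Proof. by vm_compute. Qed.

Lemma perp_bits_grid :
  all (fun k => group2_code k ==> has (fun s =>
    (s != group2_bits) && (trace2_bits s == trace2_bits (perp_bits k))) grid_bits)
  (iota 0 16).
Proof. by vm_compute. Qed.

Lemma perp_bits_traces_uniq : uniq [seq trace2_bits (perp_bits k) | k <- iota 1 15].
Proof. by vm_compute. Qed.

Lemma ovoid_bits_traces :
  all (fun s => has (fun k =>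
    group1_code k && (trace2_bits s == trace2_bits (perp_bits k))) (iota 0 16)) ovoid_bits.
Proof. by vm_compute. Qed.

Lemma ovoid_bits_traces_uniq : uniq (map trace2_bits ovoid_bits).
Proof. by vm_compute. Qed.

Lemma perp_bits_ovoid :
  all (fun k => group1_code k ==> has (fun s =>
    trace2_bits s == trace2_bits (perp_bits k)) ovoid_bits) (iota 0 16).
Proof. by vm_compute. Qed.

Section Geometry.
Variable R : rcfType.

Lemma is_lineE p q r : is_line R p q r <-> code_line (code p) (code q) (code r).
Proof.
have rE : (code r == Nat.lxor (code p) (code q)) = (r == pt_mul p q).
  by rewrite -code_mul (inj_eq (can_inj codeK)).
rewrite /code_line rE -!in_Pts -!pt_anticommE -!(commuteE R) !(inj_eq (can_inj codeK)).
split => [[Pts_pqr neq_pqr comm_pqr /op_mul_scaledP r_pq] | ].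
  by rewrite Pts_pqr neq_pqr comm_pqr r_pq eqxx.
by case/and4P => Pts_pqr neq_pqr comm_pqr /eqP/op_mul_scaledP.
Qed.

Lemma hyperplaneE H : hyperplane R H <-> H \subset Pts /\ hyperplane_bits (bits H).
Proof.
split => [[HPts Hlines] | [HPts Hbits]]; split => //; last move=> p q r pqr.
  apply/allP => i; rewrite mem_iota => /andP[_ i16].
  apply/allP => j; rewrite mem_iota => /andP[_ j16]; apply/implyP => ijk.
  have k16 : Nat.lxor i j < 16.
    by rewrite -(decodeK i16) -(decodeK j16) -code_mul code_lt.
  have L : is_line R (decode i) (decode j) (decode (Nat.lxor i j)).
    by apply/is_lineE; rewrite !decodeK.
  case: (L) => _ /and3P[ij jk ik] _ _.
  move: (Hlines _ _ _ L); rewrite card_set3 // !mem_bits !decodeK //.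
  by rewrite !inE => -[] ->.
have /is_lineE L := pqr; case: pqr => _ /and3P[pq qr pr] _ _.
have rE : code r = Nat.lxor (code p) (code q) by case/and4P: L => _ _ _ /eqP.
have /allP/(_ _ (code_in_iota q)) := allP Hbits _ (code_in_iota p).
rewrite /= -rE L /= card_set3 // !mem_bits !inE.
by case/orP => /eqP ->; [left | right].
Qed.

Lemma bits_perp p : bits (perp R p) = perp_bits (code p).
Proof.
apply/eq_in_map => k; rewrite mem_iota => /andP[_ k16].
by rewrite in_set in_Pts commuteE pt_anticommE !decodeK.
Qed.

Lemma grid_bits_mem Q : grid R Q -> bits Q \in grid_bits.
Proof.
by case=> /hyperplaneE[QPts Qbits] Q9; rewrite mem_filter Qbits -Q9 bits_in_pointsets.
Qed.

Lemma ovoid_bits_mem O : ovoid R O -> bits O \in ovoid_bits.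
Proof.
case=> /hyperplaneE[OPts Obits] O5 Oanti.
rewrite mem_filter Obits -O5 bits_in_pointsets // andbT.
apply/allP => i; rewrite mem_iota => /andP[_ i16].
apply/allP => j; rewrite mem_iota => /andP[_ j16]; apply/implyP => /and3P[Oi Oj ij].
rewrite nth_bits // in Oi; rewrite nth_bits // in Oj.
have ij' : decode i != decode j.
  by apply: contra_neq ij => /(congr1 code); rewrite !decodeK.
by have := Oanti _ _ Oi Oj ij'; rewrite commuteE pt_anticommE !decodeK // negbK.
Qed.

Lemma grid_of_bits s : s \in grid_bits -> grid R (set_of_bits s).
Proof.
rewrite mem_filter => /andP[s_hyp /pointsetsP[s16 s9 sPts]].
by split; [apply/hyperplaneE | ]; rewrite ?card_bits set_of_bitsK.
Qed.

Lemma ovoid_of_bits s : s \in ovoid_bits -> ovoid R (set_of_bits s).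
Proof.
rewrite mem_filter => /andP[/andP[s_hyp s_anti] /pointsetsP[s16 s5 sPts]].
split; [apply/hyperplaneE | | move=> p q]; rewrite ?card_bits ?set_of_bitsK //.
rewrite !inE commuteE pt_anticommE negbK => sp sq pq.
have /allP/(_ _ (code_in_iota q)) := allP s_anti _ (code_in_iota p).
by rewrite sp sq (inj_eq (can_inj codeK)) pq.
Qed.

Lemma grid_trace Q : grid R Q -> Q != Q0 ->
  exists2 p, p \in group2 & Q :&: group2 = perp R p :&: group2.
Proof.
move=> gQ QQ0; have /allP/(_ _ (grid_bits_mem gQ)) := grid_bits_traces.
rewrite -bits_group2 (inj_eq bits_inj) (negbTE QQ0) orFb.
case/hasP => k; rewrite mem_iota => /andP[_ k16] /andP[k2 /eqP Qk].
exists (decode k); first by rewrite in_group2 decodeK.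
by apply: bits_inj; rewrite !bits_setI_group2 Qk bits_perp decodeK.
Qed.

Lemma grid_trace_inj Q Q' : grid R Q -> grid R Q' ->
  Q :&: group2 = Q' :&: group2 -> Q = Q'.
Proof.
move=> gQ gQ' QQ'; apply/bits_inj/(uniq_map_inj_in grid_bits_traces_uniq).
- exact: grid_bits_mem.
- exact: grid_bits_mem.
- by rewrite -!bits_setI_group2 QQ'.
Qed.

Lemma perp_grid p : p \in group2 ->
  exists2 Q, grid R Q /\ Q != Q0 & Q :&: group2 = perp R p :&: group2.
Proof.
rewrite in_group2 => p2; have /allP/(_ _ (code_in_iota p)) := perp_bits_grid.
rewrite p2 => /hasP[s s_grid /andP[s_Q0 /eqP s_p]]; have s_gQ := grid_of_bits s_grid.
(* Clear s_grid: closing tactics would otherwise try to evaluate s \in grid_bits. *)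
move: s_grid; rewrite mem_filter => /andP[_ /pointsetsP[s16 _ _]].
exists (set_of_bits s); first split => //.
  by apply: contra_neq s_Q0 => sQ0; rewrite -(set_of_bitsK s16) sQ0 bits_group2.
by apply: bits_inj; rewrite !bits_setI_group2 set_of_bitsK // s_p bits_perp.
Qed.

Lemma perp_trace_inj p p' : p \in Pts -> p' \in Pts ->
  perp R p :&: group2 = perp R p' :&: group2 -> p = p'.
Proof.
rewrite !in_Pts => p0 p'0 pp'.
have code_in x : code x != 0 -> code x \in iota 1 15.
  by rewrite mem_iota lt0n => ->; apply: code_lt.
apply/(can_inj codeK)/(uniq_map_inj_in perp_bits_traces_uniq (code_in _ p0) (code_in _ p'0)).
have trace_perp x : trace2_bits (perp_bits (code x)) = bits (perp R x :&: group2).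
  by rewrite bits_setI_group2 bits_perp.
by rewrite !trace_perp; apply: congr1 pp'.
Qed.

Lemma ovoid_trace O : ovoid R O ->
  exists2 p, p \in group1 & O :&: group2 = perp R p :&: group2.
Proof.
move=> oO; have /allP/(_ _ (ovoid_bits_mem oO)) := ovoid_bits_traces.
case/hasP => k; rewrite mem_iota => /andP[_ k16] /andP[k1 /eqP Ok].
exists (decode k); first by rewrite in_group1 decodeK.
by apply: bits_inj; rewrite !bits_setI_group2 Ok bits_perp decodeK.
Qed.

Lemma ovoid_trace_inj O O' : ovoid R O -> ovoid R O' ->
  O :&: group2 = O' :&: group2 -> O = O'.
Proof.
move=> oO oO' OO'; apply/bits_inj/(uniq_map_inj_in ovoid_bits_traces_uniq).
- exact: ovoid_bits_mem.
- exact: ovoid_bits_mem.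
- by rewrite -!bits_setI_group2 OO'.
Qed.

Lemma perp_ovoid p : p \in group1 ->
  exists2 O, ovoid R O & O :&: group2 = perp R p :&: group2.
Proof.
rewrite in_group1 => p1; have /allP/(_ _ (code_in_iota p)) := perp_bits_ovoid.
rewrite p1 => /hasP[s s_ovoid /eqP s_p]; have s_oO := ovoid_of_bits s_ovoid.
move: s_ovoid; rewrite mem_filter => /andP[_ /pointsetsP[s16 _ _]].
exists (set_of_bits s) => //.
by apply: bits_inj; rewrite !bits_setI_group2 set_of_bitsK // s_p bits_perp.
Qed.

End Geometry.

Local Open Scope ring_scope.

(* Defaults to the identity when A has no such point. *)
Definition trace_point (R : rcfType) (A Q : {set pt}) : pt :=
  odflt (ord0, ord0) [pick p in A | Q :&: group2 == perp R p :&: group2].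

Section TracePoint.
Variables (R : rcfType) (A : {set pt}) (F : {set pt} -> Prop).
Hypothesis A_Pts : A \subset Pts.
Hypothesis F_Pts : forall Q, F Q -> Q \subset Pts.
Hypothesis F_trace :
  forall Q, F Q -> exists2 p, p \in A & Q :&: group2 = perp R p :&: group2.
Hypothesis F_inj :
  forall Q Q', F Q -> F Q' -> Q :&: group2 = Q' :&: group2 -> Q = Q'.
Hypothesis F_onto :
  forall p, p \in A -> exists2 Q, F Q & Q :&: group2 = perp R p :&: group2.

Local Notation f := (trace_point R A).

Lemma trace_pointP Q : F Q -> f Q \in A /\ Q :&: group2 = perp R (f Q) :&: group2.
Proof.
case/F_trace => p pA Qp; rewrite /trace_point; case: pickP => [q /andP[qA /eqP] // |].
by move/(_ p); rewrite pA Qp eqxx.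
Qed.

Lemma trace_point_bij :
  [/\ forall Q, F Q -> f Q \in A /\
        (forall rho : 'M[R[i]]_4,
           hstate Q rho /\ mms rho <-> hstate (perp R (f Q)) rho /\ mms rho),
      forall Q Q', F Q -> F Q' -> f Q = f Q' -> Q = Q'
    & forall p, p \in A -> exists2 Q, F Q & f Q = p].
Proof.
split => [Q FQ | Q Q' FQ FQ' fQQ' | p pA].
- have [fQA Qf] := trace_pointP FQ; split => // rho.
  apply: hstate_mms_trace2 => //; first exact: F_Pts.
  by apply/subsetP => q; rewrite inE => /andP[].
- apply: F_inj => //; have [_ ->] := trace_pointP FQ.
  by have [_ ->] := trace_pointP FQ'; rewrite fQQ'.
- have [Q FQ Qp] := F_onto pA; exists Q => //; have [fQA Qf] := trace_pointP FQ.
  apply: (perp_trace_inj (subsetP A_Pts _ fQA) (subsetP A_Pts _ pA)).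
  exact: etrans (esym Qf) Qp.
Qed.

End TracePoint.

Theorem proposition4 (R : rcfType) :
  (* (i) *)
  (forall rho : 'M[R[i]]_4,
     (hstate Q0 rho /\ mms rho) <-> (density rho /\ mms rho)) /\
  (* (ii) *)
  (exists f : {set pt} -> pt,
     [/\ forall Q, grid R Q -> Q != Q0 ->
           f Q \in group2 /\
           (forall rho : 'M[R[i]]_4,
              (hstate Q rho /\ mms rho) <-> (hstate (perp R (f Q)) rho /\ mms rho)),
         forall Q Q', grid R Q -> Q != Q0 -> grid R Q' -> Q' != Q0 ->
           f Q = f Q' -> Q = Q'
       & forall p, p \in group2 -> exists Q, [/\ grid R Q, Q != Q0 & f Q = p]]) /\
  (* (iii) *)
  (exists g : {set pt} -> pt,
     [/\ forall O, ovoid R O ->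
           g O \in group1 /\
           (forall rho : 'M[R[i]]_4,
              (hstate O rho /\ mms rho) <-> (hstate (perp R (g O)) rho /\ mms rho)),
         forall O O', ovoid R O -> ovoid R O' -> g O = g O' -> O = O'
       & forall p, p \in group1 -> exists O, ovoid R O /\ g O = p]).

Proof.
have g2_Pts : group2 \subset Pts by rewrite Pts_group12 subsetUr.
have g1_Pts : group1 \subset Pts by rewrite Pts_group12 subsetUl.
split.
  move=> rho; split => [/(hstate_mmsE _ g2_Pts)[] // | [dens mmsr]].
  by apply/(hstate_mmsE _ g2_Pts); split => // q; rewrite setDv inE.
split.
  have [states inj onto] := @trace_point_bij R group2 (fun Q => grid R Q /\ Q != Q0)
    g2_Pts (fun Q gQ => gQ.1.1.1) (fun Q gQ => grid_trace gQ.1 gQ.2)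
    (fun Q Q' gQ gQ' => grid_trace_inj gQ.1 gQ'.1) (@perp_grid R).
  exists (trace_point R group2).
  split => [Q gQ QQ0 | Q Q' gQ QQ0 gQ' Q'Q0 | p /onto[Q [gQ QQ0] <-]]; last by exists Q.
    exact: states.
  exact: inj.
have [states inj onto] := @trace_point_bij R group1 (ovoid R) g1_Pts
  (fun O oO => let: And3 (conj O_Pts _) _ _ := oO in O_Pts)
  (@ovoid_trace R) (@ovoid_trace_inj R) (@perp_ovoid R).
exists (trace_point R group1).
split => [O oO | O O' oO oO' | p /onto[O oO <-]]; last by exists O.
  exact: states.
exact: inj.
Qed.
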